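(* For every $k\ge0$, the map sending a face $F$ of $I(\mathfrak{gl}_n,V\oplus\bigwedge^2)$ to the set $\{(a,b)\in\mathbb{E}^\ast_n:\vec v(a,b)\in F\}$ induces a bijection from the set of $k$-faces of $I(\mathfrak{gl}_n,V\oplus\bigwedge^2)$ onto the set of $k$-element chains of the poset $\mathbb{E}^\ast_n$.
   Context: Identify the diagonal Cartan subalgebra of $\mathfrak{gl}_n$ with $\mathbb{R}^n$ with coordinates $x_1,\dots,x_n$. Let $W=\{x_1\ge\cdots\ge x_n\}$ and $W^0=\{x_1>\cdots>x_n\}$. For $1\le i\le j\le n$ let $\lambda_{i,j}^\perp$ be the hyperplane $x_i+x_j=0$ (for $i=j$: $x_i=0$); $I(\mathfrak{gl}_n,V\oplus\bigwedge^2)$ is the arrangement of these hyperplanes restricted to $W$. Chambers are the closures of the connected components of $W^0\setminus\bigcup\lambda_{i,j}^\perp$; a face is a chamber or the intersection of a chamber with a supporting hyperplane; a $k$-face is a face whose linear span has dimension $k$. Let $\mathbb{E}^\ast_n=\{(a,b)\in\mathbb{N}^2:1\le a+b\le n\}$ with the product order $(a,b)\le(c,d)\iff a\le c$ and $b\le d$; a chain is a subset whose elements are pairwise comparable, and a $k$-chain is a chain with $k$ elements. Let $\vec v(a,b)=(1,\dots,1,0,\dots,0,-1,\dots,-1)\in\mathbb{R}^n$ with $a$ ones, $n-a-b$ zeros and $b$ minus-ones. *)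

From HB Require Import structures.
From mathcomp Require Import all_boot all_order all_algebra.
From mathcomp Require Import all_classical all_reals all_analysis.
Set Implicit Arguments. Unset Strict Implicit. Unset Printing Implicit Defensive.
Import Order.TTheory GRing.Theory Num.Theory.
Import numFieldNormedType.Exports.
Local Open Scope classical_set_scope.
Local Open Scope ring_scope.

Section Arrangement.
Variables (R : realType) (n : nat).

(* R^n is 'rV[R]_n, with coordinates x 0 i (i : 'I_n, 0-based). *)
Definition coord (x : 'rV[R]_n) (i : 'I_n) : R := x ord0 i.

Definition Wopen : set 'rV[R]_n :=
  [set x | forall i j : 'I_n, (i < j)%N -> coord x j < coord x i].

Definition lam_perp (i j : 'I_n) : set 'rV[R]_n :=
  [set x | if i == j then coord x i = 0 else coord x i + coord x j = 0].

Definition arr_complement : set 'rV[R]_n :=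
  [set x | Wopen x /\ forall i j : 'I_n, (i <= j)%N -> ~ lam_perp i j x].

Definition chamber (C : set 'rV[R]_n) : Prop :=
  exists2 x, arr_complement x & C = closure (connected_component arr_complement x).

Definition dotv (l x : 'rV[R]_n) : R := \sum_(i < n) coord l i * coord x i.

Definition supporting (l : 'rV[R]_n) (c : R) (C : set 'rV[R]_n) : Prop :=
  l != 0 /\ (forall x, C x -> c <= dotv l x) /\ (exists x, C x /\ dotv l x = c).

Definition face (F : set 'rV[R]_n) : Prop :=
  exists2 C, chamber C &
    (F = C \/ exists l c, supporting l c C /\ F = C `&` [set x | dotv l x = c]).

Definition span_dim (F : set 'rV[R]_n) (k : nat) : Prop :=
  exists s : seq 'rV[R]_n,
    [/\ (forall x, x \in s -> F x), (forall x, F x -> x \in (span s))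
      & \dim (span s) = k].

Definition kface (k : nat) (F : set 'rV[R]_n) : Prop := face F /\ span_dim F k.

(* E*_n = {(a,b) in N^2 : 1 <= a + b <= n}, realized inside 'I_n.+1 * 'I_n.+1 *)
Definition Estar : {set 'I_n.+1 * 'I_n.+1} :=
  [set p : 'I_n.+1 * 'I_n.+1 | (1 <= p.1 + p.2 <= n)%N].

Definition leE (p q : 'I_n.+1 * 'I_n.+1) : bool :=
  ((p.1 <= q.1)%N && (p.2 <= q.2)%N).

Definition kchain (k : nat) (S : {set 'I_n.+1 * 'I_n.+1}) : Prop :=
  [/\ S \subset Estar,
      (forall p q, p \in S -> q \in S -> leE p q || leE q p)
    & #|S| = k].

Definition vec_ab (p : 'I_n.+1 * 'I_n.+1) : 'rV[R]_n :=
  \row_(i < n) (if (i < p.1)%N then 1 else if (i < n - p.2)%N then 0 else -1).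

Definition face_to_set (F : set 'rV[R]_n) : {set 'I_n.+1 * 'I_n.+1} :=
  [set p in Estar | `[< F (vec_ab p) >]].

End Arrangement.

From Pilot Require Import Defs.
From HB Require Import structures.
From mathcomp Require Import all_boot all_order all_algebra.
From mathcomp Require Import all_classical all_reals all_analysis.
From mathcomp Require Import zify ring lra.
Import Order.TTheory GRing.Theory Num.Theory.
Import numFieldNormedType.Exports.
Local Open Scope classical_set_scope.
Local Open Scope ring_scope.

(* Fix a point x of the complement, let e_i be the sign of x_i and order the
   coordinates by decreasing |x_i|.  The connected component of x is the convex
   open cone where the e_i y_i are positive and ordered like the |x_i|, so the
   chamber of x is the simplicial cone {y | e_i y_i >= e_j y_j >= 0 whenever
   |x_i| > |x_j|}.  Its rays g_0, ..., g_(n-1), where g_r carries e_i on the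
   r+1 coordinates of largest |x_i| and 0 elsewhere, are nested sign vectors of
   the form v(a,b), and conversely a v(a,b) in the chamber is one of them.
   Faces of a simplicial cone are spanned by subsets of its rays, so a k-face
   contains exactly k vectors v(a,b); they form a k-chain and span the face,
   which gives injectivity.  For surjectivity, a k-chain S is realised by a
   point whose first n - max b coordinates are positive and the others
   negative, and whose |x_i| grows with the number of (a,b) in S such that
   v(a,b)_i is nonzero: every v(a,b), (a,b) in S, is then a ray of its chamber. *)

Set Implicit Arguments. Unset Strict Implicit. Unset Printing Implicit Defensive.

Section InitialSegments.
Variable n : nat.

Lemma card_ord_ltn m : (m <= n)%N -> #|[set j : 'I_n | (j < m)%N]%SET| = m.
Proof.
move=> le_mn.
have -> : [set j : 'I_n | (j < m)%N]%SET = (widen_ord le_mn @: [set: 'I_m])%SET.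
  apply/setP => j; rewrite inE; apply/idP/imsetP => [jm|[k _ ->]].
    by exists (Ordinal jm) => //; apply: val_inj.
  by rewrite /= ltn_ord.
by rewrite card_imset ?cardsT ?card_ord // => a b /(congr1 val) /= /val_inj.
Qed.

Lemma down_closed_memE (D : {set 'I_n}) :
  (forall i j : 'I_n, (j < i)%N -> i \in D -> j \in D) ->
  forall i : 'I_n, (i \in D) = (i < #|D|)%N.
Proof.
move=> hD i; apply/idP/idP => [iD|].
  have sub : [set j : 'I_n | (j < i.+1)%N]%SET \subset D.
    apply/fintype.subsetP => j; rewrite inE ltnS leq_eqVlt.
    by case/orP => [/eqP/val_inj -> //|/hD]; apply.
  by have := subset_leq_card sub; rewrite card_ord_ltn.
apply: contraTT => iD; rewrite -leqNgt.
have sub : D \subset [set j : 'I_n | (j < i)%N]%SET.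
  apply/fintype.subsetP => j jD; rewrite inE ltnNge; apply: contra iD.
  by rewrite leq_eqVlt => /orP[/eqP/val_inj -> //|/hD]; apply.
by have := subset_leq_card sub; rewrite card_ord_ltn // ltnW.
Qed.

Lemma up_closed_memE (D : {set 'I_n}) :
  (forall i j : 'I_n, (i < j)%N -> i \in D -> j \in D) ->
  forall i : 'I_n, (i \in D) = (n - #|D| <= i)%N.
Proof.
move=> hD i.
have hC : forall i j : 'I_n, (j < i)%N -> i \in ~: D -> j \in ~: D.
  move=> i1 j1 h; rewrite !inE; apply: contra; exact: hD.
have cardC : #|~: D| = (n - #|D|)%N.
  by rewrite -[X in (X - _)%N](card_ord n) -(cardsC D) addKn.
by rewrite -[LHS]negbK -finset.in_setC down_closed_memE // cardC -leqNgt.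
Qed.

End InitialSegments.

Section ConvexCombination.
Variable R : realFieldType.

Lemma convex_comb_le_lt (a b c d t : R) : 0 < t <= 1 -> a <= b -> c < d ->
  (1 - t) * a + t * c < (1 - t) * b + t * d.
Proof.
case/andP=> t_gt0 t_le1 le_ab lt_cd; rewrite -subr_gt0.
have -> : (1 - t) * b + t * d - ((1 - t) * a + t * c) = (1 - t) * (b - a) + t * (d - c).
  by ring.
by rewrite ltr_wpDl ?mulr_ge0 ?mulr_gt0 ?subr_ge0 ?subr_gt0.
Qed.

Lemma convex_comb_lt (a b c d t : R) : 0 <= t <= 1 -> a < b -> c < d ->
  (1 - t) * a + t * c < (1 - t) * b + t * d.
Proof.
case/andP=> t_ge0 t_le1 lt_ab lt_cd.
have [->|t_neq0] := eqVneq t 0; first by rewrite subr0 !mul1r !mul0r !addr0.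
by apply: convex_comb_le_lt => //; [rewrite lt0r t_neq0 t_ge0 | exact: ltW].
Qed.

End ConvexCombination.

Section SignPreservation.
Variables (T : topologicalType) (R : realType).

Lemma connected_continuous_gt0 (B : set T) (f : T -> R) (x0 y : T) :
  connected B -> continuous f -> (forall z, B z -> f z != 0) ->
  B x0 -> 0 < f x0 -> B y -> 0 < f y.
Proof.
move=> B_conn f_cont f_neq0 Bx0 f_x0 By.
have /connected_intervalP f_itv :=
  connected_continuous_connected B_conn (continuous_subspaceT f_cont).
rewrite ltNge; apply/negP => f_y.
have [z Bz f_z] : (f @` B) 0.
  by apply: (f_itv (f y) (f x0)); [exists y|exists x0|rewrite f_y ltW].
by move: (f_neq0 z Bz); rewrite f_z eqxx.
Qed.

Lemma open_lt0 (f : T -> R) : continuous f -> open [set z | f z < 0].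
Proof.
move=> f_cont; have -> : [set z | f z < 0] = f @^-1` [set r | r < 0] by [].
by apply: open_comp; [move=> z _; exact: f_cont | exact: open_lt].
Qed.

End SignPreservation.

Section DotProduct.
Variables (R : realType) (n : nat).
Implicit Types (l y z : 'rV[R]_n).

Lemma dotvE l y : dotv l y = \sum_i l ord0 i * y ord0 i.
Proof. by []. Qed.

Lemma dotvDr l y z : dotv l (y + z) = dotv l y + dotv l z.
Proof. by rewrite !dotvE -big_split; apply: eq_bigr => i _; rewrite mxE mulrDr. Qed.

Lemma dotvZr l c y : dotv l (c *: y) = c * dotv l y.
Proof. by rewrite !dotvE mulr_sumr; apply: eq_bigr => i _; rewrite mxE mulrCA. Qed.

Lemma dotvDl l z y : dotv (l + z) y = dotv l y + dotv z y.
Proof. by rewrite !dotvE -big_split; apply: eq_bigr => i _; rewrite mxE mulrDl. Qed.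

Lemma dotv0r l : dotv l 0 = 0.
Proof. by have := dotvZr l 0 0; rewrite scale0r mul0r. Qed.

Lemma dotv0l y : dotv 0 y = 0.
Proof. by rewrite dotvE big1 // => i _; rewrite mxE mul0r. Qed.

Lemma dotv_sumr l I (s : seq I) (P : pred I) (c : I -> R) (w : I -> 'rV[R]_n) :
  dotv l (\sum_(k <- s | P k) c k *: w k) = \sum_(k <- s | P k) c k * dotv l (w k).
Proof.
elim/big_rec2: _ => [|k a b _ <-]; first exact: dotv0r.
by rewrite dotvDr dotvZr.
Qed.

Lemma dotv_suml I (s : seq I) (P : pred I) (w : I -> 'rV[R]_n) y :
  dotv (\sum_(k <- s | P k) w k) y = \sum_(k <- s | P k) dotv (w k) y.
Proof.
elim/big_rec2: _ => [|k a b _ <-]; first exact: dotv0l.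
by rewrite dotvDl.
Qed.

End DotProduct.

Section VecAb.
Variables (R : realType) (n : nat).
Implicit Types (p q : 'I_n.+1 * 'I_n.+1) (i : 'I_n).

Lemma vec_abE p i : vec_ab R p ord0 i =
  if (i < p.1)%N then 1 else if (i < n - p.2)%N then 0 else -1.
Proof. by rewrite mxE. Qed.

Lemma vec_ab_eq1 p i : (p.1 + p.2 <= n)%N -> (vec_ab R p ord0 i == 1) = (i < p.1)%N.
Proof.
move=> le_n; rewrite vec_abE; case: ifP => [|_]; first by rewrite eqxx.
by case: ifP => _; apply/negbTE/eqP; lra.
Qed.

Lemma vec_ab_eqN1 p i : (p.1 + p.2 <= n)%N -> (vec_ab R p ord0 i == -1) = (n - p.2 <= i)%N.
Proof.
move=> le_n; rewrite vec_abE; case: ifP => i_p1.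
  have -> : (n - p.2 <= i)%N = false by lia.
  by apply/negbTE/eqP; lra.
case: ifP => i_p2; last by rewrite eqxx leqNgt i_p2.
by rewrite leqNgt i_p2; apply/negbTE/eqP; lra.
Qed.

Lemma vec_ab_values p i :
  vec_ab R p ord0 i = 1 \/ vec_ab R p ord0 i = 0 \/ vec_ab R p ord0 i = -1.
Proof. by rewrite vec_abE; case: ifP => _; [left|case: ifP => _; right; [left|right]]. Qed.

Lemma vec_ab_eq1_leq p q : (p.1 + p.2 <= n)%N -> (q.1 + q.2 <= n)%N ->
  (forall i, vec_ab R p ord0 i = 1 -> vec_ab R q ord0 i = 1) -> (p.1 <= q.1)%N.
Proof.
move=> hp hq eq1; rewrite leqNgt; apply/negP => lt_qp.
have q1_n : (q.1 < n)%N by lia.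
have := vec_ab_eq1 (Ordinal q1_n) hq; rewrite /= ltnn => /negbT/eqP; apply.
by apply/eq1/eqP; rewrite vec_ab_eq1.
Qed.

Lemma vec_ab_eqN1_leq p q : (p.1 + p.2 <= n)%N -> (q.1 + q.2 <= n)%N ->
  (forall i, vec_ab R p ord0 i = -1 -> vec_ab R q ord0 i = -1) -> (p.2 <= q.2)%N.
Proof.
move=> hp hq eqN1; rewrite leqNgt; apply/negP => lt_qp.
have i_n : (n - p.2 < n)%N by lia.
have := vec_ab_eqN1 (Ordinal i_n) hq; rewrite /=.
have -> : (n - q.2 <= n - p.2)%N = false by lia.
by move=> /negbT/eqP; apply; apply/eqN1/eqP; rewrite vec_ab_eqN1.
Qed.

Lemma vec_ab_inj p q : (p.1 + p.2 <= n)%N -> (q.1 + q.2 <= n)%N ->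
  vec_ab R p = vec_ab R q -> p = q.
Proof.
move=> hp hq eq_pq.
have le1 : (p.1 <= q.1)%N by apply: vec_ab_eq1_leq => // i; rewrite eq_pq.
have ge1 : (q.1 <= p.1)%N by apply: vec_ab_eq1_leq => // i; rewrite eq_pq.
have le2 : (p.2 <= q.2)%N by apply: vec_ab_eqN1_leq => // i; rewrite eq_pq.
have ge2 : (q.2 <= p.2)%N by apply: vec_ab_eqN1_leq => // i; rewrite eq_pq.
case: p q {hp hq eq_pq} le1 ge1 le2 ge2 => [a b] [c d] /= *.
by congr pair; apply: val_inj; apply/eqP; rewrite eqn_leq; apply/andP.
Qed.

Lemma vec_ab_neq0 p : p \in Estar n -> exists i, vec_ab R p ord0 i != 0.
Proof.
rewrite inE => /andP[ab_gt0 le_n]; case: (ltnP 0 p.1) => a_gt0.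
  have n_gt0 : (0 < n)%N by lia.
  by exists (Ordinal n_gt0); rewrite vec_abE /= a_gt0 oner_eq0.
have last_n : (n - 1 < n)%N by lia.
exists (Ordinal last_n); rewrite vec_abE /=.
have -> : (n - 1 < p.1)%N = false by lia.
have -> : (n - 1 < n - p.2)%N = false by lia.
by rewrite oppr_eq0 oner_eq0.
Qed.

Lemma vec_ab_neq0E p i : (p.1 + p.2 <= n)%N ->
  (vec_ab R p ord0 i != 0) = (i < p.1)%N || (n - p.2 <= i)%N.
Proof.
move=> le_n; rewrite vec_abE; case: ifP => i_p1; first by rewrite oner_eq0.
case: ifP => i_p2; first by rewrite eqxx /=; lia.
by rewrite oppr_eq0 oner_eq0 /=; lia.
Qed.

Lemma vec_ab_support_mono p q i : (p.1 + p.2 <= n)%N -> (q.1 + q.2 <= n)%N -> leE p q ->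
  vec_ab R p ord0 i != 0 -> vec_ab R q ord0 i != 0.
Proof.
move=> hp hq /andP[le1 le2]; rewrite !vec_ab_neq0E //.
by case/orP => supp; apply/orP; [left|right]; lia.
Qed.

Lemma Estar_leq p : p \in Estar n -> (p.1 + p.2 <= n)%N.
Proof. by rewrite inE => /andP[]. Qed.

Lemma face_to_set_Estar (F : set 'rV[R]_n) p : p \in face_to_set F -> p \in Estar n.
Proof. by rewrite inE => /andP[]. Qed.

Lemma face_to_set_mem (F : set 'rV[R]_n) p : p \in face_to_set F -> F (vec_ab R p).
Proof. by rewrite inE => /andP[_ /asboolP]. Qed.

End VecAb.

Section Complement.
Variables (R : realType) (n : nat) (y : 'rV[R]_n).
Hypothesis hy : arr_complement y.

Lemma complement_neq0 i : y ord0 i != 0.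
Proof. by case: hy => _ /(_ i i (leqnn _)); rewrite /lam_perp /= eqxx => /eqP. Qed.

Lemma complement_norm_inj : injective (fun i : 'I_n => `|y ord0 i|).
Proof.
case: hy => decr off_perp.
have norm_neq (i j : 'I_n) : (i < j)%N -> `|y ord0 i| != `|y ord0 j|.
  move=> lt_ij; rewrite eqr_norm2 negb_or gt_eqF ?decr //=.
  have := off_perp i j (ltnW lt_ij); rewrite /lam_perp /= -val_eqE /= ltn_eqF //.
  by rewrite /Defs.coord; apply: contra_not_neq => ->; rewrite addNr.
move=> i j /= eq_norm; apply/val_inj; case: (ltngtP i j) => // [lt|gt].
- by move: (norm_neq _ _ lt); rewrite eq_norm eqxx.
- by move: (norm_neq _ _ gt); rewrite eq_norm eqxx.
Qed.

End Complement.

Section Chamber.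
Variables (R : realType) (n : nat) (x : 'rV[R]_n).
Hypothesis hx : arr_complement x.
Implicit Types (i j : 'I_n) (p q : 'I_n.+1 * 'I_n.+1).

Definition sgn (i : 'I_n) : R := if 0 < x ord0 i then 1 else -1.
Definition mag (i : 'I_n) : R := `|x ord0 i|.
Definition mag_rank (i : 'I_n) : nat := #|[set j : 'I_n | mag i < mag j]%SET|.

Lemma base_sign i : 0 < x ord0 i \/ x ord0 i < 0.
Proof. by have := complement_neq0 hx i; rewrite neq_lt => /orP[]; [right|left]. Qed.

Lemma sgn_pos i : 0 < x ord0 i -> sgn i = 1.
Proof. by rewrite /sgn => ->. Qed.

Lemma sgn_neg i : x ord0 i < 0 -> sgn i = -1.
Proof. by rewrite /sgn => neg_i; rewrite ltNge (ltW neg_i). Qed.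

Lemma sgn_mul_base i : sgn i * x ord0 i = mag i.
Proof.
rewrite /mag; case: (base_sign i) => s; first by rewrite sgn_pos // mul1r gtr0_norm.
by rewrite sgn_neg // mulN1r ltr0_norm.
Qed.

Lemma mag_gt0 i : 0 < mag i.
Proof. by rewrite /mag normr_gt0 complement_neq0. Qed.

Lemma sgn_mul_sgn i : sgn i * sgn i = 1.
Proof. by rewrite /sgn; case: ifP => _; rewrite ?mulrNN mulr1. Qed.

Lemma sgn_cases i : sgn i = 1 \/ sgn i = -1.
Proof. by rewrite /sgn; case: ifP; [left|right]. Qed.

Lemma normr_sgn_mul i v : `|sgn i * v| = `|v|.
Proof. by rewrite normrM; case: (sgn_cases i) => ->; rewrite ?normrN normr1 mul1r. Qed.

Lemma mag_inj : injective mag.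
Proof. exact: complement_norm_inj hx. Qed.

Lemma mag_rank_lt i j : (mag_rank i < mag_rank j)%N = (mag j < mag i).
Proof.
apply/idP/idP => [|lt_ji]; last first.
  apply/proper_card/fintype.properP; split; last by exists i; rewrite !inE ?ltxx.
  by apply/fintype.subsetP => k; rewrite !inE; apply: lt_trans.
apply: contraLR; rewrite -leNgt -leqNgt => le_ij.
by apply/subset_leq_card/fintype.subsetP => k; rewrite !inE; apply: le_lt_trans.
Qed.

Lemma mag_rank_inj : injective mag_rank.
Proof.
by move=> i j eq_rk; apply: mag_inj; apply/eqP; rewrite eq_le !leNgt -!mag_rank_lt eq_rk ltnn.
Qed.

Lemma mag_rank_ltn i : (mag_rank i < n)%N.
Proof.
rewrite -[X in (_ < X)%N]card_ord; apply/proper_card/fintype.properP.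
by split; [exact/fintype.subsetP | exists i; rewrite ?inE ?ltxx].
Qed.

Lemma mag_rank_onto r : (r < n)%N -> exists i, mag_rank i = r.
Proof.
move=> hr; pose rank_ord i := Ordinal (mag_rank_ltn i).
have inj : injective rank_ord by move=> i j /(congr1 val) /mag_rank_inj.
by have /codomP[i /(congr1 val) /= ->] := injF_onto inj (Ordinal hr); exists i.
Qed.

Definition chamber_cone : set 'rV[R]_n :=
  [set y | (forall i, 0 <= sgn i * y ord0 i) /\
           (forall i j, (mag_rank i < mag_rank j)%N -> sgn j * y ord0 j <= sgn i * y ord0 i)].

Definition ray (r : nat) : 'rV[R]_n := \row_i (if (mag_rank i <= r)%N then sgn i else 0).

(* [ray_coord r y] is the coordinate of [y] on [ray r], see [ray_decomp]. *)
Definition rank_coord (r : nat) (y : 'rV[R]_n) : R :=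
  \sum_i (if mag_rank i == r then sgn i * y ord0 i else 0).
Definition ray_coord (r : nat) (y : 'rV[R]_n) : R := rank_coord r y - rank_coord r.+1 y.

Lemma rank_coord_rank i y : rank_coord (mag_rank i) y = sgn i * y ord0 i.
Proof.
rewrite /rank_coord (bigD1 i) //= eqxx big1 ?addr0 // => j nji.
by rewrite (inj_eq mag_rank_inj) (negbTE nji).
Qed.

Lemma rank_coord_out r y : (n <= r)%N -> rank_coord r y = 0.
Proof.
move=> hr; rewrite /rank_coord big1 // => i _.
by case: eqP => // eq_r; have := mag_rank_ltn i; rewrite eq_r ltnNge hr.
Qed.

Lemma rayE r i : ray r ord0 i = if (mag_rank i <= r)%N then sgn i else 0.
Proof. by rewrite mxE. Qed.

(* At coordinate i only the rays r >= mag_rank i contribute, and their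
   coordinates telescope to sgn i * y_i. *)
Lemma ray_decomp y : y = \sum_(r < n) ray_coord r y *: ray r.
Proof.
apply/rowP => i; rewrite summxE.
under eq_bigr do rewrite mxE rayE.
rewrite -(big_mkord xpredT (fun r => ray_coord r y * (if (mag_rank i <= r)%N then sgn i else 0))).
rewrite (@big_cat_nat _ _ _ (mag_rank i) 0 n _ _ (leq0n _) (ltnW (mag_rank_ltn i))) /=.
rewrite big1_seq ?add0r; last first.
  by move=> r; rewrite mem_index_iota leq0n /= => lt_r; rewrite leqNgt lt_r /= mulr0.
rewrite (@eq_big_nat _ _ _ (mag_rank i) n _ (fun r => ray_coord r y * sgn i)); last first.
  by move=> r; case/andP => -> _.
rewrite -mulr_suml.
have -> : \sum_(mag_rank i <= r < n) ray_coord r y =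
          - \sum_(mag_rank i <= r < n) (rank_coord r.+1 y - rank_coord r y).
  by rewrite -sumrN; apply: eq_bigr => r _; rewrite /ray_coord opprB.
rewrite telescope_sumr; last exact: ltnW (mag_rank_ltn i).
by rewrite rank_coord_out // rank_coord_rank sub0r opprK mulrC mulrA sgn_mul_sgn mul1r.
Qed.

Lemma rank_coord_ray r s : rank_coord r (ray s) = if ((r < n) && (r <= s))%N then 1 else 0.
Proof.
case: (ltnP r n) => hr /=; last by rewrite rank_coord_out.
have [i <-] := mag_rank_onto hr.
by rewrite rank_coord_rank rayE; case: ifP; rewrite ?sgn_mul_sgn ?mulr0.
Qed.

Lemma ray_coord_ray r s : (s < n)%N -> ray_coord r (ray s) = (r == s)%:R.
Proof.
move=> hs; rewrite /ray_coord !rank_coord_ray.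
case: (ltngtP r s) => cmp; case: ifP => cond; case: ifP => cond'; try lia;
  by rewrite ?subrr ?subr0 ?(ltn_eqF cmp) ?(gtn_eqF cmp) ?cmp ?eqxx.
Qed.

Lemma rank_coordD r y z : rank_coord r (y + z) = rank_coord r y + rank_coord r z.
Proof.
rewrite /rank_coord -big_split /=; apply: eq_bigr => i _; rewrite !mxE.
by case: ifP; rewrite ?addr0 // mulrDr.
Qed.

Lemma rank_coordZ r c y : rank_coord r (c *: y) = c * rank_coord r y.
Proof.
rewrite /rank_coord mulr_sumr; apply: eq_bigr => i _; rewrite !mxE.
by case: ifP; rewrite ?mulr0 // mulrCA.
Qed.

Lemma ray_coordD r y z : ray_coord r (y + z) = ray_coord r y + ray_coord r z.
Proof. by rewrite /ray_coord !rank_coordD; ring. Qed.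

Lemma ray_coordZ r c y : ray_coord r (c *: y) = c * ray_coord r y.
Proof. by rewrite /ray_coord !rank_coordZ; ring. Qed.

Lemma ray_coord0 r : ray_coord r 0 = 0.
Proof. by have := ray_coordZ r 0 0; rewrite scale0r mul0r. Qed.

Lemma ray_coord_ge0 r y : chamber_cone y -> 0 <= ray_coord r y.
Proof.
case=> y_ge0 y_mono; rewrite /ray_coord subr_ge0.
case: (ltnP r.+1 n) => hr.
  have [i ei] := mag_rank_onto hr; have [j ej] := mag_rank_onto (ltnW hr).
  by rewrite -ei -ej !rank_coord_rank; apply: y_mono; rewrite ei ej.
rewrite (rank_coord_out y hr); case: (ltnP r n) => hr'; last by rewrite rank_coord_out.
by have [j <-] := mag_rank_onto hr'; rewrite rank_coord_rank.
Qed.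

Lemma ray_in_cone r : chamber_cone (ray r).
Proof.
split => [i|i j lt_ij]; rewrite !rayE.
  by case: ifP; rewrite ?mulr0 ?sgn_mul_sgn.
case: ifP => hj; case: ifP => hi; rewrite ?mulr0 ?sgn_mul_sgn //.
by move: hi; rewrite (leq_trans (ltnW lt_ij) hj).
Qed.

Lemma cone0 : chamber_cone 0.
Proof. by split => *; rewrite !mxE !mulr0. Qed.

Lemma coneD y z : chamber_cone y -> chamber_cone z -> chamber_cone (y + z).
Proof.
case=> [y_ge0 y_mono] [z_ge0 z_mono]; split => [i|i j lt_ij]; rewrite !mxE !mulrDr.
  exact: addr_ge0.
exact: lerD (y_mono _ _ lt_ij) (z_mono _ _ lt_ij).
Qed.

Lemma coneZ c y : 0 <= c -> chamber_cone y -> chamber_cone (c *: y).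
Proof.
move=> c_ge0 [y_ge0 y_mono]; split => [i|i j lt_ij]; rewrite !mxE.
  by rewrite mulrCA mulr_ge0.
by rewrite mulrCA [sgn i * _]mulrCA ler_wpM2l // y_mono.
Qed.

Lemma base_decreasing i j : (i < j)%N -> x ord0 j < x ord0 i.
Proof. by case: hx => decr _; exact: decr. Qed.

Lemma mag_rank_lt_pos i j : (i < j)%N -> 0 < x ord0 j -> (mag_rank i < mag_rank j)%N.
Proof.
move=> lt_ij pos_j; have := base_decreasing lt_ij => decr.
by rewrite mag_rank_lt /mag !gtr0_norm //; lra.
Qed.

Lemma mag_rank_lt_neg i j : (i < j)%N -> x ord0 i < 0 -> (mag_rank j < mag_rank i)%N.
Proof.
move=> lt_ij neg_i; have := base_decreasing lt_ij => decr.
by rewrite mag_rank_lt /mag !ltr0_norm //; lra.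
Qed.

Lemma sgn_mul_eq1 i v : sgn i * v = 1 -> v = sgn i.
Proof. by move=> h; rewrite -[v]mul1r -(sgn_mul_sgn i) -mulrA h mulr1. Qed.

Lemma sgn_mul_eq0 i v : sgn i * v = 0 -> v = 0.
Proof. by move=> h; rewrite -[v]mul1r -(sgn_mul_sgn i) -mulrA h mulr0. Qed.

Lemma vec_ab_cone_ray p : p \in Estar n -> chamber_cone (vec_ab R p) ->
  exists2 r, (r < n)%N & vec_ab R p = ray r.
Proof.
move=> hp [y_ge0 y_mono]; set y := vec_ab R p.
have y01 i : sgn i * y ord0 i = 0 \/ sgn i * y ord0 i = 1.
  have := y_ge0 i; rewrite /y.
  by case: (vec_ab_values R p i) => [->|[->|->]]; case: (sgn_cases i) => ->; lra.
have [i0 nz] := vec_ab_neq0 R hp.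
have y_i0 : sgn i0 * y ord0 i0 == 1.
  by case: (y01 i0) => [/sgn_mul_eq0 y0|->]; [move: nz; rewrite y0 eqxx|].
have [i1 /eqP y_i1 max_i1] := @arg_maxnP _ i0 (fun i => sgn i * y ord0 i == 1) mag_rank y_i0.
exists (mag_rank i1); first exact: mag_rank_ltn.
apply/rowP => j; rewrite rayE; case: (ltngtP (mag_rank j) (mag_rank i1)) => cmp.
- apply: sgn_mul_eq1; have := y_mono _ _ cmp; rewrite y_i1.
  by case: (y01 j) => ->; lra.
- by case: (y01 j) => [/sgn_mul_eq0 //|/eqP/max_i1/=]; rewrite leqNgt cmp.
- by rewrite (mag_rank_inj cmp); apply: sgn_mul_eq1.
Qed.

Lemma ray_vec_ab r : (r < n)%N -> exists2 p, p \in Estar n & ray r = vec_ab R p.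
Proof.
move=> hr.
set A := [set i | (mag_rank i <= r)%N && (0 < x ord0 i)]%SET.
set B := [set i | (mag_rank i <= r)%N && (x ord0 i < 0)]%SET.
have memA (i : 'I_n) : (i \in A) = (i < #|A|)%N.
  apply: down_closed_memE => {}i j lt_ji; rewrite !inE => /andP[ri pos_i].
  have pos_j : 0 < x ord0 j by rewrite (lt_trans pos_i) ?base_decreasing.
  by rewrite pos_j (leq_trans _ ri) // ltnW // mag_rank_lt_pos.
have memB (i : 'I_n) : (i \in B) = (n - #|B| <= i)%N.
  apply: up_closed_memE => {}i j lt_ij; rewrite !inE => /andP[ri neg_i].
  have neg_j : x ord0 j < 0 by rewrite (lt_trans _ neg_i) ?base_decreasing.
  by rewrite neg_j (leq_trans _ ri) // ltnW // mag_rank_lt_neg.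
have cardAB : #|A :|: B| = (#|A| + #|B|)%N.
  rewrite -cardsUI; suff -> : A :&: B = finset.set0 by rewrite cards0 addn0.
  apply/setP => i; rewrite !inE andbACA andbb.
  by case: (ltgtP (x ord0 i) 0); rewrite ?andbF.
have AB_le : (#|A| + #|B| <= n)%N by rewrite -cardAB -[X in (_ <= X)%N]card_ord max_card.
have AB_gt0 : (0 < #|A| + #|B|)%N.
  have [i0 ri0] := mag_rank_onto (leq_ltn_trans (leq0n r) hr).
  rewrite -cardAB; apply/card_gt0P; exists i0; rewrite !inE ri0 /=.
  by case: (base_sign i0) => ->; rewrite ?orbT.
have A_le : (#|A| <= n)%N := leq_trans (leq_addr _ _) AB_le.
have B_le : (#|B| <= n)%N := leq_trans (leq_addl _ _) AB_le.
exists (inord #|A|, inord #|B|).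
  by rewrite inE /= !inordK ?ltnS ?AB_gt0 ?AB_le.
apply/rowP => i; rewrite rayE vec_abE /= !inordK ?ltnS //.
rewrite -[X in if X then 1 else _]memA ltnNge -[X in if ~~ X then 0 else _]memB !inE.
case: (mag_rank i <= r)%N => //=.
by case: (base_sign i) => s; rewrite ?(sgn_pos s) ?(sgn_neg s) s // lt_gtF.
Qed.

Lemma ray_mono r r' i : (r <= r')%N -> ray r ord0 i != 0 -> ray r' ord0 i = ray r ord0 i.
Proof.
move=> le_r; rewrite !rayE; case: ifP => [le_ir|]; last by rewrite eqxx.
by rewrite (leq_trans le_ir le_r).
Qed.

Lemma vec_ab_rays_leE p q r r' : (p.1 + p.2 <= n)%N -> (q.1 + q.2 <= n)%N ->
  vec_ab R p = ray r -> vec_ab R q = ray r' -> (r <= r')%N -> leE p q.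
Proof.
move=> hp hq eq_p eq_q le_r; apply/andP; split.
  apply: (vec_ab_eq1_leq (R:=R)) => // i; rewrite eq_p eq_q => ray_i.
  by rewrite (ray_mono le_r) // ray_i oner_neq0.
apply: (vec_ab_eqN1_leq (R:=R)) => // i; rewrite eq_p eq_q => ray_i.
by rewrite (ray_mono le_r) // ray_i oppr_eq0 oner_neq0.
Qed.

End Chamber.

Section ChamberTopology.
Variables (R : realType) (n : nat) (x : 'rV[R]_n).
Hypothesis hx : arr_complement x.
Implicit Types (i j : 'I_n) (y z : 'rV[R]_n).
Notation sgn := (sgn x). Notation mag_rank := (mag_rank x).
Notation chamber_cone := (chamber_cone x).

Definition open_chamber : set 'rV[R]_n :=
  [set y | (forall i, 0 < sgn i * y ord0 i) /\
           (forall i j, (mag_rank i < mag_rank j)%N -> sgn j * y ord0 j < sgn i * y ord0 i)].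

Lemma continuous_sgn_coord i : continuous (fun y : 'rV[R]_n => sgn i * y ord0 i).
Proof.
move=> y; apply: (continuousM (s := fun=> sgn i) (t := fun y : 'rV[R]_n => y ord0 i)).
  exact: cst_continuous.
exact: coord_continuous.
Qed.

Lemma continuous_sgn_gap i j :
  continuous (fun y : 'rV[R]_n => sgn i * y ord0 i - sgn j * y ord0 j).
Proof.
move=> y; apply: (continuousB (f := fun y : 'rV[R]_n => sgn i * y ord0 i)
                              (g := fun y : 'rV[R]_n => sgn j * y ord0 j));
  exact: continuous_sgn_coord.
Qed.

Lemma sgn_mul_lerp i y z t :
  sgn i * (y + t *: (z - y)) ord0 i = (1 - t) * (sgn i * y ord0 i) + t * (sgn i * z ord0 i).
Proof. by rewrite !mxE; ring. Qed.

Lemma open_chamber_base : open_chamber x.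
Proof.
split => [i|i j lt_ij]; rewrite !sgn_mul_base //; first exact: mag_gt0.
by rewrite -mag_rank_lt.
Qed.

Lemma open_chamber_complement y : open_chamber y -> arr_complement y.
Proof.
case=> y_gt0 y_mono; split => [i j lt_ij|i j le_ij]; rewrite /Defs.coord.
  have := y_gt0 i; have := y_gt0 j; have := base_decreasing hx lt_ij.
  case: (base_sign hx i) => si; case: (base_sign hx j) => sj;
    rewrite ?(sgn_pos si) ?(sgn_neg si) ?(sgn_pos sj) ?(sgn_neg sj); try lra.
  - have := y_mono _ _ (mag_rank_lt_pos hx lt_ij sj); rewrite (sgn_pos si) (sgn_pos sj); lra.
  - have := y_mono _ _ (mag_rank_lt_neg hx lt_ij si); rewrite (sgn_neg si) (sgn_neg sj); lra.
rewrite /lam_perp /= /Defs.coord; case: eqP => [_|/eqP neq_ij] y0.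
  by have := y_gt0 i; rewrite y0 mulr0 ltxx.
move/eqP: y0; rewrite addr_eq0 => /eqP y_ij.
have eq_sgn : sgn i * y ord0 i = sgn j * y ord0 j.
  rewrite -(gtr0_norm (y_gt0 i)) -(gtr0_norm (y_gt0 j)) !normr_sgn_mul.
  by rewrite y_ij normrN.
case: (ltngtP (mag_rank i) (mag_rank j)) => [lt|gt|/(mag_rank_inj hx) eq].
- by have := y_mono _ _ lt; rewrite eq_sgn ltxx.
- by have := y_mono _ _ gt; rewrite eq_sgn ltxx.
- by move: neq_ij; rewrite eq eqxx.
Qed.

Lemma open_chamber_segment y z t : open_chamber y -> open_chamber z -> 0 <= t <= 1 ->
  open_chamber (y + t *: (z - y)).
Proof.
case=> y_gt0 y_mono [z_gt0 z_mono] t01; split => [i|i j lt_ij]; rewrite !sgn_mul_lerp.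
  by have := convex_comb_lt t01 (y_gt0 i) (z_gt0 i); rewrite !mulr0 addr0.
exact: convex_comb_lt t01 (y_mono _ _ lt_ij) (z_mono _ _ lt_ij).
Qed.

Lemma connected_sub_open_chamber (B : set 'rV[R]_n) :
  connected B -> B `<=` @arr_complement R n -> B x -> B `<=` open_chamber.
Proof.
move=> B_conn B_compl Bx y By; have [x_gt0 x_mono] := open_chamber_base.
split => [i|i j lt_ij].
  apply: (connected_continuous_gt0 B_conn (@continuous_sgn_coord i) _ Bx (x_gt0 i) By).
  move=> z /B_compl z_compl.
  by rewrite -normr_eq0 normr_sgn_mul normr_eq0 complement_neq0.
rewrite -subr_gt0.
apply: (connected_continuous_gt0 B_conn (@continuous_sgn_gap i j) _ Bx _ By).
  move=> z /B_compl z_compl; rewrite subr_eq0; apply: contraL lt_ij => /eqP eq_ij.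
  suff -> : i = j by rewrite ltnn.
  apply: (complement_norm_inj z_compl) => /=.
  by have := congr1 Num.norm eq_ij; rewrite !normr_sgn_mul.
by rewrite /= subr_gt0; exact: x_mono.
Qed.

Lemma component_open_chamber : connected_component (@arr_complement R n) x = open_chamber.
Proof.
apply/seteqP; split.
  apply: connected_sub_open_chamber; [exact: component_connected|exact: connected_component_sub|].
  exact: connected_component_refl.
move=> z Uz.
pose f := fun t : R => x + t *: (z - x).
have f_cont : continuous f.
  move=> t; apply: (continuousD (f := fun=> x) (g := fun t : R => t *: (z - x))).
    exact: cst_continuous.
  by apply: (continuousZr_tmp (s := fun t : R => t)); exact: cvg_id.
apply: (connected_component_max (B := f @` `[0, 1])).
- by exists 0; [rewrite /= in_itv /= lexx ler01|rewrite /f scale0r addr0].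
- move=> _ [t t01 <-]; apply: open_chamber_complement.
  by apply: open_chamber_segment => //; exact: open_chamber_base.
- apply: connected_continuous_connected; first exact: segment_connected.
  exact: continuous_subspaceT.
- by exists 1; [rewrite /= in_itv /= lexx ler01|rewrite /f scale1r addrC subrK].
Qed.

Lemma closure_open_chamber_sub : closure open_chamber `<=` chamber_cone.
Proof.
move=> y cl_y; split => [i|i j lt_ij]; rewrite leNgt; apply/negP => neg_y.
  have nb : nbhs y [set z | sgn i * z ord0 i < 0].
    by apply: open_nbhs_nbhs; split => //; apply: open_lt0; exact: continuous_sgn_coord.
  have [z [[z_gt0 _] /= z_neg]] := cl_y _ nb.
  by have := z_gt0 i; lra.
have nb : nbhs y [set z | sgn i * z ord0 i - sgn j * z ord0 j < 0].
  apply: open_nbhs_nbhs; split; last by rewrite /=; lra.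
  by apply: open_lt0; exact: continuous_sgn_gap.
have [z [[_ z_mono] /= z_neg]] := cl_y _ nb.
by have := z_mono _ _ lt_ij; lra.
Qed.

(* For 0 < t <= 1 the point y + t (x - y) is in the open chamber, and it tends to y. *)
Lemma cone_sub_closure : chamber_cone `<=` closure open_chamber.
Proof.
move=> y [y_ge0 y_mono] B /nbhs_ballP [eps /= eps_gt0 ball_B].
have [x_gt0 x_mono] := open_chamber_base.
set N := `|x - y|; have N_ge0 : 0 <= N by exact: normr_ge0.
set t := eps / (N + eps).
have t_gt0 : 0 < t by apply: divr_gt0 => //; lra.
have t01 : 0 < t <= 1 by rewrite t_gt0 /t ler_pdivrMr ?mul1r; lra.
have tN : t * N < eps.
  rewrite /t mulrAC ltr_pdivrMr; last lra.
  by rewrite mulrDr ltrDl; apply: mulr_gt0.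
exists (y + t *: (x - y)); split.
  split => [i|i j lt_ij]; rewrite !sgn_mul_lerp.
    by have := convex_comb_le_lt t01 (y_ge0 i) (x_gt0 i); rewrite !mulr0 addr0.
  exact: convex_comb_le_lt t01 (y_mono _ _ lt_ij) (x_mono _ _ lt_ij).
apply: ball_B; rewrite -ball_normE /= opprD addrA subrr add0r normrN normrZ.
by rewrite gtr0_norm.
Qed.

Lemma closure_open_chamber : closure open_chamber = chamber_cone.
Proof. by apply/seteqP; split; [exact: closure_open_chamber_sub|exact: cone_sub_closure]. Qed.

Lemma closure_component : closure (connected_component (@arr_complement R n) x) = chamber_cone.
Proof. by rewrite component_open_chamber closure_open_chamber. Qed.

End ChamberTopology.

Section Faces.
Variables (R : realType) (n : nat).
Implicit Types (x y : 'rV[R]_n) (Z : pred nat) (A : {set 'I_n.+1 * 'I_n.+1}).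

Definition subcone x Z : set 'rV[R]_n :=
  [set y | chamber_cone x y /\ forall r, (r < n)%N -> ~~ Z r -> ray_coord x r y = 0].

Definition vec_ab_cone (A : {set 'I_n.+1 * 'I_n.+1}) : set 'rV[R]_n :=
  [set y | exists c : 'I_n.+1 * 'I_n.+1 -> R,
     (forall q, 0 <= c q) /\ y = \sum_(q in A) c q *: vec_ab R q].

Lemma chamberP (C : set 'rV[R]_n) :
  chamber C -> exists2 x, arr_complement x & C = chamber_cone x.
Proof. by case=> x hx ->; exists x => //; rewrite closure_component. Qed.

Lemma chamber_cone_chamber x : arr_complement x -> chamber (chamber_cone x).
Proof. by move=> hx; exists x => //; rewrite closure_component. Qed.

Lemma dotv_ray_decomp x l y : arr_complement x ->
  dotv l y = \sum_(r < n) ray_coord x r y * dotv l (ray x r).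
Proof. by move=> hx; rewrite {1}(ray_decomp hx y) dotv_sumr. Qed.

Lemma supporting_cone_rays x l c : arr_complement x -> supporting l c (chamber_cone x) ->
  c = 0 /\ forall r : 'I_n, 0 <= dotv l (ray x r).
Proof.
move=> hx [_ [l_ge [y0 [cone_y0 l_y0]]]].
have c_le0 : c <= 0 by have := l_ge 0 (cone0 x); rewrite dotv0r.
have l_rays (r : 'I_n) : 0 <= dotv l (ray x r).
  rewrite leNgt; apply/negP => l_neg.
  set mu := (c - 1) / dotv l (ray x r).
  have mu_ge0 : 0 <= mu by apply: mulr_le0; [lra|rewrite invr_le0; exact: ltW].
  have := l_ge _ (coneZ mu_ge0 (ray_in_cone x r)); rewrite dotvZr /mu mulfVK; first lra.
  by rewrite lt_eqF.
split=> //; apply/eqP; rewrite eq_le c_le0 -l_y0 (dotv_ray_decomp _ _ hx) /=.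
by apply: sumr_ge0 => r _; apply: mulr_ge0; [exact: ray_coord_ge0|exact: l_rays].
Qed.

Lemma supporting_cone_subcone x l c : arr_complement x -> supporting l c (chamber_cone x) ->
  chamber_cone x `&` [set y | dotv l y = c] = subcone x (fun r => dotv l (ray x r) == 0).
Proof.
move=> hx /(supporting_cone_rays hx) [-> l_rays].
have terms_ge0 y : chamber_cone x y -> forall r : 'I_n, 0 <= ray_coord x r y * dotv l (ray x r).
  by move=> cone_y r; apply: mulr_ge0; [exact: ray_coord_ge0|exact: l_rays].
apply/seteqP; split => y [cone_y] /=.
  rewrite (dotv_ray_decomp _ _ hx) => sum0; split => // r hr l_neq0.
  have /eqP := psumr_eq0P (fun i _ => terms_ge0 y cone_y i) sum0 (i := Ordinal hr) isT.
  by rewrite mulf_eq0 /= (negbTE l_neq0) orbF => /eqP.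
move=> coord0; split => //=; rewrite (dotv_ray_decomp _ _ hx) big1 // => r _.
by case: (boolP (dotv l (ray x r) == 0)) => [/eqP ->|l_neq0]; rewrite ?mulr0 ?coord0 ?mul0r.
Qed.

Lemma face_subcone (F : set 'rV[R]_n) :
  face F -> exists2 x, arr_complement x & exists Z, F = subcone x Z.
Proof.
case=> C /chamberP [x hx ->] [->|[l [c [supp ->]]]]; exists x => //.
  by exists predT; apply/seteqP; split => y; [split|case].
by exists (fun r => dotv l (ray x r) == 0); exact: supporting_cone_subcone.
Qed.

Definition ray_coord_vec x (r : nat) : 'rV[R]_n :=
  \row_i ((if mag_rank x i == r then sgn x i else 0) -
          (if mag_rank x i == r.+1 then sgn x i else 0)).

Lemma dotv_ray_coord_vec x r y : dotv (ray_coord_vec x r) y = ray_coord x r y.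
Proof.
rewrite dotvE /ray_coord /rank_coord -sumrB; apply: eq_bigr => i _; rewrite mxE.
by case: ifP; case: ifP => *; ring.
Qed.

Lemma subcone0 x Z : subcone x Z 0.
Proof. by split; [exact: cone0|move=> r _ _; exact: ray_coord0]. Qed.

Lemma subconeD x Z y z : subcone x Z y -> subcone x Z z -> subcone x Z (y + z).
Proof.
case=> [cone_y coord_y] [cone_z coord_z]; split; first exact: coneD.
by move=> r hr nZr; rewrite ray_coordD coord_y ?coord_z ?addr0.
Qed.

Lemma subconeZ x Z c y : 0 <= c -> subcone x Z y -> subcone x Z (c *: y).
Proof.
move=> c_ge0 [cone_y coord_y]; split; first exact: coneZ.
by move=> r hr nZr; rewrite ray_coordZ coord_y ?mulr0.
Qed.

Lemma subcone_face x Z : arr_complement x -> face (subcone x Z).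
Proof.
move=> hx; exists (chamber_cone x); first exact: chamber_cone_chamber.
have [/forallP allZ|/forallPn [r0 nZr0]] := boolP [forall r : 'I_n, Z r].
  left; apply/seteqP; split => [y [] //|y cone_y]; split => // r hr.
  by rewrite (allZ (Ordinal hr)).
right; set L := \sum_(r < n | ~~ Z r) ray_coord_vec x r; exists L, 0.
have dotL y : dotv L y = \sum_(r < n | ~~ Z r) ray_coord x r y.
  by rewrite dotv_suml; apply: eq_bigr => r _; rewrite dotv_ray_coord_vec.
have L_ray0 : dotv L (ray x r0) = 1.
  rewrite dotL (bigD1 r0) //= (ray_coord_ray hx) // eqxx big1 ?addr0 // => r /andP[_ neq_r].
  by rewrite (ray_coord_ray hx) // val_eqE (negbTE neq_r).
split; first split; [|split|].
- by apply: contra_eq_neq L_ray0 => ->; rewrite dotv0l eq_sym oner_neq0.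
- by move=> y cone_y; rewrite dotL; apply: sumr_ge0 => r _; exact: ray_coord_ge0.
- by exists 0; split; [exact: cone0|exact: dotv0r].
apply/seteqP; split => y [cone_y] /=; rewrite dotL.
  by move=> coord0; split => //; rewrite big1 // => r; exact: coord0.
move=> sum0; split => // r hr nZr.
exact: (psumr_eq0P (P := fun r : 'I_n => ~~ Z r) (fun i _ => ray_coord_ge0 hx i cone_y) sum0
  (i := Ordinal hr) nZr).
Qed.

Lemma face_to_set_subcone x Z p : arr_complement x ->
  (p \in face_to_set (subcone x Z)) =
  (p \in Estar n) && [exists r : 'I_n, Z r && (vec_ab R p == ray x r)].
Proof.
move=> hx; rewrite inE; apply/andP/andP => [[p_E /asboolP [cone_p coord0]]|].
  split => //; have [r hr eq_p] := vec_ab_cone_ray hx p_E cone_p.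
  apply/existsP; exists (Ordinal hr); rewrite /= eq_p eqxx andbT.
  apply: contraT => nZr; have := coord0 r hr nZr.
  by rewrite eq_p (ray_coord_ray hx) // eqxx => /eqP; rewrite oner_eq0.
case=> p_E /existsP [r /andP[Zr /eqP ->]]; split => //; apply/asboolP.
split=> [|s hs nZs]; first exact: ray_in_cone.
by rewrite (ray_coord_ray hx) //; case: eqP => // eq_s; move: nZs; rewrite eq_s Zr.
Qed.

Lemma vec_ab_cone0 A : vec_ab_cone A 0.
Proof. by exists (fun=> 0); split => //; rewrite big1 // => q _; rewrite scale0r. Qed.

Lemma vec_ab_coneD A y z : vec_ab_cone A y -> vec_ab_cone A z -> vec_ab_cone A (y + z).
Proof.
case=> c [c_ge0 ->] [d [d_ge0 ->]]; exists (fun q => c q + d q); split.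
  by move=> q; apply: addr_ge0.
by rewrite -big_split; apply: eq_bigr => q _; rewrite scalerDl.
Qed.

Lemma vec_ab_coneZ A m y : 0 <= m -> vec_ab_cone A y -> vec_ab_cone A (m *: y).
Proof.
move=> m_ge0 [c [c_ge0 ->]]; exists (fun q => m * c q); split.
  by move=> q; apply: mulr_ge0.
by rewrite scaler_sumr; apply: eq_bigr => q _; rewrite scalerA.
Qed.

Lemma vec_ab_cone_gen A p : p \in A -> vec_ab_cone A (vec_ab R p).
Proof.
move=> p_A; exists (fun q => (q == p)%:R); split; first by move=> q; case: eqP.
rewrite (bigD1 p) //= eqxx scale1r big1 ?addr0 // => q /andP[_ neq_qp].
by rewrite (negbTE neq_qp) scale0r.
Qed.

Lemma subcone_vec_ab_cone x Z : arr_complement x ->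
  subcone x Z = vec_ab_cone (face_to_set (subcone x Z)).
Proof.
move=> hx; apply/seteqP; split => y.
  case=> cone_y coord0; rewrite (ray_decomp hx y).
  apply: (big_ind (vec_ab_cone _)); [exact: vec_ab_cone0|exact: vec_ab_coneD|] => r _.
  have [Zr|nZr] := boolP (Z r); last by rewrite coord0 // scale0r; exact: vec_ab_cone0.
  have [p p_E eq_p] := ray_vec_ab hx (ltn_ord r).
  rewrite eq_p; apply: vec_ab_coneZ; first exact: ray_coord_ge0.
  apply: vec_ab_cone_gen; rewrite face_to_set_subcone // p_E /=; apply/existsP; exists r.
  by rewrite Zr eq_p eqxx.
case=> c [c_ge0 ->]; apply: (big_ind (subcone x Z)); [exact: subcone0|exact: subconeD|].
by move=> q; rewrite inE => /andP[_ /asboolP]; apply: subconeZ.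
Qed.

Lemma face_vec_ab_cone (F : set 'rV[R]_n) : face F -> F = vec_ab_cone (face_to_set F).
Proof. by case/face_subcone => x hx [Z ->]; exact: subcone_vec_ab_cone. Qed.

End Faces.

Section Span.
Variables (R : realType) (n : nat).
Implicit Types (x y : 'rV[R]_n) (Z : pred nat) (A : {set 'I_n.+1 * 'I_n.+1}).

Definition rays x : seq 'rV[R]_n := [seq ray x r | r <- iota 0 n].
Definition vec_ab_seq A : seq 'rV[R]_n := [seq vec_ab R q | q <- enum A].

Lemma free_rays x : arr_complement x -> free (rays x).
Proof.
move=> hx; rewrite /free size_map size_iota.
suff -> : <<rays x>>%VS = fullv by rewrite dimvf /dim /= mul1n.
apply/eqP; rewrite eqEsubv subvf /=; apply/subvP => y _.
rewrite (ray_decomp hx y); apply: memv_suml => r _; apply/memvZ/memv_span.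
by apply/mapP; exists (nat_of_ord r) => //; rewrite mem_iota /= add0n ltn_ord.
Qed.

Lemma vec_ab_cone_span A y : vec_ab_cone A y -> y \in <<vec_ab_seq A>>%VS.
Proof.
case=> c [_ ->]; apply: memv_suml => q q_A; apply/memvZ/memv_span.
by apply/mapP; exists q => //; rewrite mem_enum.
Qed.

(* The v(a,b) of a face form a subfamily of the linearly independent rays of the chamber. *)
Lemma free_vec_ab_seq x Z : arr_complement x -> free (vec_ab_seq (face_to_set (subcone x Z))).
Proof.
move=> hx; rewrite (@perm_free _ _ _ [seq w <- rays x | `[< subcone x Z w >]]).
  exact/filter_free/free_rays.
apply: uniq_perm.
- rewrite map_inj_in_uniq ?enum_uniq // => p q; rewrite !mem_enum => p_F q_F.
  exact: vec_ab_inj (Estar_leq (face_to_set_Estar p_F)) (Estar_leq (face_to_set_Estar q_F)).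
- exact/filter_uniq/free_uniq/free_rays.
move=> w; rewrite mem_filter; apply/mapP/andP => [[q q_F ->]|[/asboolP F_w /mapP [r r_n eq_w]]].
  rewrite mem_enum in q_F; split; first by apply/asboolP; exact: face_to_set_mem q_F.
  move: q_F; rewrite face_to_set_subcone // => /andP[_ /existsP [r /andP[_ /eqP ->]]].
  by apply/mapP; exists (nat_of_ord r) => //; rewrite mem_iota /= add0n ltn_ord.
have [q q_E eq_q] : exists2 q, q \in Estar n & ray x r = vec_ab R q.
  by apply: (ray_vec_ab hx); move: r_n; rewrite mem_iota add0n.
exists q; last by rewrite eq_w eq_q.
by rewrite mem_enum inE q_E /=; apply/asboolP; rewrite -eq_q -eq_w.
Qed.

Lemma span_dim_subcone x Z k : arr_complement x ->
  span_dim (subcone x Z) k <-> k = #|face_to_set (subcone x Z)|.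
Proof.
move=> hx; set A := face_to_set (subcone x Z).
have F_cone := subcone_vec_ab_cone Z hx.
have dimA : \dim <<vec_ab_seq A>> = #|A|.
  by have /eqP -> := free_vec_ab_seq Z hx; rewrite size_map cardE.
have vec_ab_F v : v \in vec_ab_seq A -> subcone x Z v.
  by case/mapP => q; rewrite mem_enum => q_A ->; exact: face_to_set_mem q_A.
split=> [[s [s_F F_s <-]]|->].
  rewrite -dimA; congr (\dim _); apply/eqP; rewrite eqEsubv.
  apply/andP; split; apply/span_subvP => v v_s.
    by apply: vec_ab_cone_span; rewrite -/A -F_cone; exact: s_F.
  exact/F_s/vec_ab_F.
exists (vec_ab_seq A); split => // v.
by rewrite F_cone; exact: vec_ab_cone_span.
Qed.

Lemma subcone_chain x Z p q : arr_complement x ->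
  p \in face_to_set (subcone x Z) -> q \in face_to_set (subcone x Z) -> leE p q || leE q p.
Proof.
move=> hx p_F q_F.
have p_le := Estar_leq (face_to_set_Estar p_F); have q_le := Estar_leq (face_to_set_Estar q_F).
move: p_F q_F; rewrite !face_to_set_subcone //.
move=> /andP[_ /existsP [r /andP[_ /eqP eq_p]]] /andP[_ /existsP [s /andP[_ /eqP eq_q]]].
have [le_rs|lt_sr] := leqP r s; first by rewrite (vec_ab_rays_leE p_le q_le eq_p eq_q le_rs).
by rewrite (vec_ab_rays_leE q_le p_le eq_q eq_p (ltnW lt_sr)) orbT.
Qed.

End Span.

Section ChainPoint.
Variables (R : realType) (n : nat) (S : {set 'I_n.+1 * 'I_n.+1}).
Hypothesis S_Estar : S \subset Estar n.
Hypothesis S_chain : forall p q, p \in S -> q \in S -> leE p q || leE q p.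
Implicit Types (i j : 'I_n) (p q : 'I_n.+1 * 'I_n.+1).

Lemma chain_leq p : p \in S -> (p.1 + p.2 <= n)%N.
Proof. by move=> p_S; apply: Estar_leq; exact: (fintype.subsetP S_Estar). Qed.

Definition max_neg : nat := \max_(q in S) q.2.
Definition n_pos : nat := (n - max_neg)%N.

Lemma leq_max_neg q : q \in S -> (q.2 <= max_neg)%N.
Proof. by move=> q_S; apply: (@leq_bigmax_cond _ _ (fun q => nat_of_ord q.2)). Qed.

Lemma chain_fst_leq q : q \in S -> (q.1 + max_neg <= n)%N.
Proof.
move=> q_S; have S_gt0 : (0 < #|S|)%N by apply/card_gt0P; exists q.
have [qm qm_S qm_max] := @eq_bigmax_cond _ _ (fun q => nat_of_ord q.2) S_gt0.
rewrite -/max_neg in qm_max; have := chain_leq q_S; have := chain_leq qm_S.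
by case/orP: (S_chain q_S qm_S) => /andP[le1 le2]; have := leq_max_neg q_S; lia.
Qed.

Lemma vec_ab_neq0_pos q i : q \in S -> (i < n_pos)%N ->
  (vec_ab R q ord0 i != 0) = (i < q.1)%N.
Proof.
move=> q_S i_pos; rewrite vec_ab_neq0E ?chain_leq //.
have := leq_max_neg q_S; have := chain_fst_leq q_S; rewrite /n_pos in i_pos.
by case: (i < q.1)%N => //= *; apply/negbTE; rewrite -ltnNge; lia.
Qed.

Lemma vec_ab_neq0_neg q i : q \in S -> (n_pos <= i)%N ->
  (vec_ab R q ord0 i != 0) = (n - q.2 <= i)%N.
Proof.
move=> q_S i_neg; rewrite vec_ab_neq0E ?chain_leq //.
have := chain_fst_leq q_S; rewrite /n_pos in i_neg => le_n.
by have -> : (i < q.1)%N = false by apply/negbTE; rewrite -leqNgt; lia.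
Qed.

(* A larger
   support count puts i earlier in the order of decreasing |x_i|, which is what
   makes every v(a,b), (a,b) in S, a ray of its chamber; the tiebreak, even on the
   positive and odd on the negative coordinates, makes the coordinates strictly
   decreasing and keeps them off the hyperplanes x_i + x_j = 0. *)
Definition support_count i : nat := #|[set q in S | vec_ab R q ord0 i != 0]%SET|.
Definition weight_base : nat := (2 * n + 1)%N.
Definition tiebreak i : nat := if (i < n_pos)%N then (2 * (n - i))%N else (2 * i + 1)%N.
Definition weight i : nat := (support_count i * weight_base + tiebreak i)%N.
Definition chain_point : 'rV[R]_n :=
  \row_i (if (i < n_pos)%N then (weight i)%:R else - (weight i)%:R).

Lemma chain_pointE i :
  chain_point ord0 i = if (i < n_pos)%N then (weight i)%:R else - (weight i)%:R.
Proof. by rewrite mxE. Qed.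

Lemma tiebreak_bounds i : (0 < tiebreak i < weight_base)%N.
Proof. by rewrite /tiebreak /weight_base; have := ltn_ord i; case: ifP => _; lia. Qed.

Lemma weight_gt0 i : (0 < weight i)%N.
Proof. by rewrite /weight; have := tiebreak_bounds i; lia. Qed.

Lemma weight_mod i : (weight i %% weight_base)%N = tiebreak i.
Proof. by rewrite /weight modnMDl modn_small //; case/andP: (tiebreak_bounds i). Qed.

Lemma support_count_le i j :
  (forall q, q \in S -> vec_ab R q ord0 j != 0 -> vec_ab R q ord0 i != 0) ->
  (support_count j <= support_count i)%N.
Proof.
move=> supp_ji; apply/subset_leq_card/fintype.subsetP => q.
by rewrite !inE => /andP[q_S nz_j]; rewrite q_S supp_ji.
Qed.

Lemma support_count_lt i j q : q \in S -> vec_ab R q ord0 j != 0 -> vec_ab R q ord0 i == 0 ->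
  (support_count i < support_count j)%N.
Proof.
move=> q_S nz_j z_i; apply/proper_card/fintype.properP; split; last first.
  by exists q; rewrite !inE ?q_S ?nz_j //= z_i.
apply/fintype.subsetP => q'; rewrite !inE => /andP[q'_S nz'_i]; rewrite q'_S /=.
case/orP: (S_chain q'_S q_S) => le_q.
  by have := vec_ab_support_mono (chain_leq q'_S) (chain_leq q_S) le_q nz'_i; rewrite z_i.
exact: vec_ab_support_mono (chain_leq q_S) (chain_leq q'_S) le_q nz_j.
Qed.

Lemma weight_lt i j : (support_count i < support_count j)%N -> (weight i < weight j)%N.
Proof.
move=> lt_sc; have /andP[_ tb_i] := tiebreak_bounds i.
have : ((support_count i).+1 * weight_base <= support_count j * weight_base)%N.
  by rewrite leq_mul2r lt_sc orbT.
by rewrite mulSn /weight; lia.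
Qed.

Lemma weight_lt_tiebreak i j : (support_count i <= support_count j)%N ->
  (tiebreak i < tiebreak j)%N -> (weight i < weight j)%N.
Proof.
move=> le_sc lt_tb.
have : (support_count i * weight_base <= support_count j * weight_base)%N.
  by rewrite leq_mul2r le_sc orbT.
by rewrite /weight; lia.
Qed.

Lemma chain_point_decreasing : Wopen chain_point.
Proof.
move=> i j lt_ij; rewrite /Defs.coord !chain_pointE.
case: (ltnP j n_pos) => [j_pos|j_neg].
  have i_pos : (i < n_pos)%N := ltn_trans lt_ij j_pos.
  rewrite i_pos ltr_nat; apply: weight_lt_tiebreak.
    apply: support_count_le => q q_S; rewrite !vec_ab_neq0_pos //; exact: ltn_trans.
  by rewrite /tiebreak i_pos j_pos; have := ltn_ord j; lia.
case: (ltnP i n_pos) => [i_pos|i_neg].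
  by have := weight_gt0 i; have := weight_gt0 j; rewrite -!(ltr0n R); lra.
rewrite ltrN2 ltr_nat; apply: weight_lt_tiebreak.
  apply: support_count_le => q q_S; rewrite !vec_ab_neq0_neg //.
  by move=> /leq_trans; apply; exact: ltnW.
by rewrite /tiebreak (ltnNge i) (ltnNge j) i_neg j_neg /=; lia.
Qed.

Lemma chain_point_off_perp i j : (i <= j)%N -> ~ lam_perp i j chain_point.
Proof.
move=> le_ij; rewrite /lam_perp /= /Defs.coord !chain_pointE.
have w_gt0 k : 0 < (weight k)%:R :> R by rewrite ltr0n weight_gt0.
case: eqP => [_|/eqP neq_ij]; first by case: ifP => _; have := w_gt0 i; lra.
have lt_ij : (i < j)%N by rewrite ltn_neqAle le_ij andbT.
have := w_gt0 i; have := w_gt0 j.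
case: (ltnP i n_pos) => i_pos; case: (ltnP j n_pos) => j_pos; try lra; last by lia.
move=> _ _ /eqP; rewrite subr_eq0 eqr_nat => /eqP /(congr1 (modn^~ weight_base)).
by rewrite !weight_mod /tiebreak i_pos (ltnNge j) j_pos /=; lia.
Qed.

Lemma chain_point_complement : arr_complement chain_point.
Proof. by split; [exact: chain_point_decreasing | exact: chain_point_off_perp]. Qed.

Lemma sgn_chain_point i : sgn chain_point i = if (i < n_pos)%N then 1 else -1.
Proof.
rewrite /sgn chain_pointE; have := weight_gt0 i; rewrite -(ltr0n R) => w_gt0.
by case: (ltnP i n_pos) => _; rewrite ?w_gt0 // oppr_gt0 ltNge (ltW w_gt0).
Qed.

Lemma sgn_chain_point_vec_ab q i : q \in S ->
  sgn chain_point i * vec_ab R q ord0 i = (vec_ab R q ord0 i != 0)%:R.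
Proof.
move=> q_S; rewrite sgn_chain_point vec_abE.
have := chain_fst_leq q_S; have := leq_max_neg q_S; rewrite /n_pos.
case: (ltnP i (n - max_neg)) => i_pos; case: (ltnP i q.1) => i_q1 *.
- by rewrite mulr1 oner_eq0.
- have -> : (i < n - q.2)%N by lia.
  by rewrite mulr0 eqxx.
- lia.
- by case: ifP => _; rewrite ?mulr0 ?eqxx ?mulrNN ?mulr1 ?oppr_eq0 ?oner_eq0.
Qed.

Lemma chain_vec_ab_in_cone q : q \in S -> chamber_cone chain_point (vec_ab R q).
Proof.
move=> q_S; split => [i|i j lt_ij]; rewrite !sgn_chain_point_vec_ab //.
have [nz_j|] := boolP (vec_ab R q ord0 j != 0); last by case: (_ != 0).
have [//|/negPn z_i] := boolP (vec_ab R q ord0 i != 0).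
have := weight_lt (support_count_lt q_S nz_j z_i); rewrite -(ltr_nat R).
move: lt_ij; rewrite mag_rank_lt /mag !chain_pointE.
by case: ifP => _; case: ifP => _; rewrite ?normrN !normr_nat; lra.
Qed.

Definition chain_rays (r : nat) : bool := [exists q in S, vec_ab R q == ray chain_point r].

Lemma face_to_set_chain : face_to_set (subcone chain_point chain_rays) = S.
Proof.
apply/setP => p; rewrite (face_to_set_subcone _ _ chain_point_complement).
apply/andP/idP => [[p_E /existsP [r /andP[/existsP [q /andP[q_S /eqP eq_q]] /eqP eq_p]]]|p_S].
  suff -> : p = q by [].
  by apply: (vec_ab_inj (R:=R)) (Estar_leq p_E) (chain_leq q_S) _; rewrite eq_p eq_q.
have p_E := fintype.subsetP S_Estar _ p_S; split => //.
have [r hr eq_p] := vec_ab_cone_ray chain_point_complement p_E (chain_vec_ab_in_cone p_S).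
apply/existsP; exists (Ordinal hr); rewrite /= eq_p eqxx andbT.
by apply/existsP; exists p; rewrite p_S eq_p eqxx.
Qed.

End ChainPoint.

Theorem theorem1p23 (R : realType) (n k : nat) :
  [/\ (forall F : set 'rV[R]_n, kface k F -> kchain k (face_to_set F)),
      (forall F G : set 'rV[R]_n, kface k F -> kface k G ->
          face_to_set F = face_to_set G -> F = G)
    & (forall S : {set 'I_n.+1 * 'I_n.+1}, kchain k S ->
          exists F : set 'rV[R]_n, kface k F /\ face_to_set F = S)].
Proof.
split.
- move=> F [/face_subcone [x hx [Z ->]] dimF]; split.
  + by apply/fintype.subsetP => p; exact: face_to_set_Estar.
  + by move=> p q; exact: subcone_chain.
  + by move/(span_dim_subcone Z k hx): dimF.
- move=> F G [faceF _] [faceG _] eq_FG.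
  by rewrite (face_vec_ab_cone faceF) (face_vec_ab_cone faceG) eq_FG.
- move=> S [S_Estar S_chain card_S].
  have hx := chain_point_complement R S_Estar S_chain.
  exists (subcone (chain_point R S) (chain_rays R S)); rewrite face_to_set_chain //.
  split=> //; split; first exact: subcone_face.
  by apply/(span_dim_subcone _ k hx); rewrite face_to_set_chain.
Qed.
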